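(* Let $q$ be a prime power, $\alpha$ an element of multiplicative order $n$ in $\mathbb{F}_{q^s}$, and $\beta$ an element of multiplicative order $n_\ell$ in $\mathbb{F}_{q_\ell^{s_\ell}}$, where $\mathbb{F}_{q_\ell}=\mathbb{F}_{q^u}$; let $r=\mathrm{lcm}(s,us_\ell)$, so both lie in $\mathbb{F}_{q^r}$. Let $\mathcal{Z}\subseteq\{0,1,\dots,n_\ell-1\}$. If $\gcd(n,n_\ell)=1$, then for all $i,j\in\{0,1,\dots,n-1\}$ with $i\ne j$, $$\gcd\Big(\prod_{m\in\mathcal{Z}}(1-x\alpha^i\beta^m),\ \prod_{m\in\mathcal{Z}}(1-x\alpha^j\beta^m)\Big)=1$$ in $\mathbb{F}_{q^r}[x]$. *)

From HB Require Import structures.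
From mathcomp Require Import all_boot all_order all_algebra all_field.
Set Implicit Arguments. Unset Strict Implicit. Unset Printing Implicit Defensive.
Import GRing.Theory.
Local Open Scope ring_scope.

Definition zprod (L : fieldType) (nl : nat) (Z : {set 'I_nl}) (a b : L) (i : nat)
  : {poly L} :=
  \prod_(m in Z) (1 - 'X * (a ^+ i * b ^+ m)%:P).

From HB Require Import structures.
From mathcomp Require Import all_boot all_order all_algebra all_field.
Set Implicit Arguments. Unset Strict Implicit. Unset Printing Implicit Defensive.
Import GRing.Theory.
Local Open Scope ring_scope.

(* Both polynomials are products of factors 1 - x c with c nonzero;
   such factors are coprime as soon as their c's differ. Raising
   alpha^i beta^m = alpha^j beta^m' to the power n_l kills beta, and alpha^{n_l}
   is still a primitive n-th root since gcd(n, n_l) = 1, which forces i = j. *)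

Lemma prim_root_neq0 (R : idomainType) (n : nat) (z : R) :
  n.-primitive_root z -> z != 0.
Proof.
move=> prim_z; apply/eqP => z0.
have := prim_expr_order prim_z; rewrite z0 expr0n eqn0Ngt (prim_order_gt0 prim_z) /=.
by move/eqP; rewrite eq_sym oner_eq0.
Qed.

Lemma one_subXC_eqp (F : fieldType) (c : F) :
  c != 0 -> 1 - 'X * c%:P %= 'X - (c^-1)%:P.
Proof.
move=> c0; have -> : 1 - 'X * c%:P = (- c) *: ('X - (c^-1)%:P).
  rewrite scalerBr -!mul_polyC -polyCM mulNr divff // !polyCN polyC1 opprK.
  by rewrite mulNr mulrC addrC.
by apply: eqp_scale; rewrite oppr_eq0.
Qed.

Lemma coprimep_one_subXC (F : fieldType) (c d : F) :
  c != 0 -> d != 0 -> c != d -> coprimep (1 - 'X * c%:P) (1 - 'X * d%:P).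
Proof.
move=> c0 d0 cd; rewrite (eqp_coprimepl _ (one_subXC_eqp c0)).
rewrite (eqp_coprimepr _ (one_subXC_eqp d0)) coprimep_XsubC2 // subr_eq0.
by apply: contra cd => /eqP/(congr1 GRing.inv); rewrite !invrK => ->.
Qed.

Lemma coprimep_prod (R : idomainType) (I J : finType) (P : pred I) (Q : pred J)
    (f : I -> {poly R}) (g : J -> {poly R}) :
  (forall i j, P i -> Q j -> coprimep (f i) (g j)) ->
  coprimep (\prod_(i | P i) f i) (\prod_(j | Q j) g j).
Proof.
move=> cop_fg; apply: (big_ind (fun r => coprimep r _)) => [|p q|i Pi].
- exact: coprime1p.
- by rewrite coprimepMl => -> ->.
rewrite coprimep_sym; apply: (big_ind (fun r => coprimep r _)) => [|p q|j Qj].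
- exact: coprime1p.
- by rewrite coprimepMl => -> ->.
by rewrite coprimep_sym cop_fg.
Qed.

Lemma prim_root_coprime_mul_inj (R : idomainType) (n nl : nat) (a b : R)
    (i j m m' : nat) :
  n.-primitive_root a -> nl.-primitive_root b -> coprime n nl ->
  (i < n)%N -> (j < n)%N ->
  a ^+ i * b ^+ m = a ^+ j * b ^+ m' -> i = j.
Proof.
move=> prim_a prim_b cop_n_nl ltin ltjn /(congr1 (fun x => x ^+ nl)).
have kill_b k : (b ^+ k) ^+ nl = 1 by rewrite -exprM mulnC exprM (prim_expr_order prim_b) expr1n.
rewrite !exprMn !kill_b !mulr1 -!exprM !(mulnC _ nl) !exprM => /eqP.
have prim_anl : n.-primitive_root (a ^+ nl).
  by rewrite prim_root_exp_coprime // coprime_sym.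
by rewrite (eq_prim_root_expr prim_anl) !modn_small // => /eqP.
Qed.

Theorem lemma3 (p k s u sl n nl : nat) (L : finFieldType)
  (alpha beta : L) (Z : {set 'I_nl}) :
  prime p -> (0 < k)%N -> (0 < s)%N -> (0 < u)%N -> (0 < sl)%N ->
  #|L| = ((p ^ k) ^ (lcmn s (u * sl)))%N ->
  alpha ^+ ((p ^ k) ^ s) = alpha ->
  beta ^+ (((p ^ k) ^ u) ^ sl) = beta ->
  n.-primitive_root alpha ->
  nl.-primitive_root beta ->
  coprime n nl ->
  forall i j : nat, (i < n)%N -> (j < n)%N -> i <> j ->
  coprimep (zprod Z alpha beta i) (zprod Z alpha beta j).
Proof.
move=> _ _ _ _ _ _ _ _ prim_a prim_b cop_n_nl i j ltin ltjn neq_ij.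
have nz e (m : 'I_nl) : alpha ^+ e * beta ^+ m != 0.
  by rewrite mulf_neq0 // expf_neq0 // (prim_root_neq0 prim_a, prim_root_neq0 prim_b).
apply: coprimep_prod => m m' _ _; apply: coprimep_one_subXC => //.
by apply/eqP => /(prim_root_coprime_mul_inj prim_a prim_b cop_n_nl ltin ltjn).
Qed.
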